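(* Let $\mathsf{F}\colon\mathbf{BPMet}\to\mathbf{BPMet}$ be a functor that preserves isometries, is locally non-expansive, and admits a dense $\omega$-bounded subfunctor. Then there is a set $\Lambda$ of predicate liftings for $\mathsf{F}$ of finite arity such that the coalgebraic logic $\mathcal{L}(\Lambda)$ is expressive, i.e. for every $\mathsf{F}$-coalgebra $(X,d,\alpha)$ and all states $x,y$, $ld^\Lambda_\alpha(x,y)\ge bd^{\mathsf{F}}_\alpha(x,y)$ as real numbers.
   Context: $\mathbf{BPMet}$ is the category of bounded-by-1 pseudometric spaces $(X,d)$ ($d\colon X\times X\to[0,1]$, $d(x,x)=0$, symmetric, triangle inequality) and non-expansive maps; isometries are maps with $d(fx,fy)=d(x,y)$. (This is the category of symmetric $\mathcal{V}$-categories for the quantale $\mathcal{V}=[0,1]_\oplus$: $[0,1]$ ordered by $\ge$, with truncated addition as tensor and unit $0$; in quantale terms $\bigvee$ is numerical infimum.) Let $[0,1]$ carry the metric $|u-v|$ and $[0,1]^n$ the sup metric. An $n$-ary predicate lifting for $\mathsf{F}$ is a natural transformation $\lambda\colon\mathbf{BPMet}(-,[0,1]^n)\to\mathbf{BPMet}(\mathsf{F}-,[0,1])$. $\mathsf{F}$ is locally non-expansive if for all non-expansive $f,g\colon X\to Y$, $\sup_{t\in\mathsf{F}X}d_{\mathsf{F}Y}(\mathsf{F}f(t),\mathsf{F}g(t))\le\sup_{x}d_Y(f(x),g(x))$. A subfunctor $\mathsf{G}$ of $\mathsf{F}$ (with $\mathsf{G}X\subseteq\mathsf{F}X$ carrying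 the subspace metric, inclusions natural) is dense if $\mathsf{G}X$ is dense in $\mathsf{F}X$ for all $X$; $\mathsf{G}$ is $\omega$-bounded if for each $X$ and $t\in\mathsf{G}X$ there are a finite subspace $X_0\subseteq X$ with inclusion $i$ and $t'\in\mathsf{G}X_0$ with $t=\mathsf{G}i(t')$. An $\mathsf{F}$-coalgebra is a non-expansive $\alpha\colon(X,d)\to\mathsf{F}(X,d)$; morphisms are non-expansive $f$ with $\beta f=\mathsf{F}f\cdot\alpha$. Behavioural distance: $bd^{\mathsf{F}}_\alpha(x,y)=\inf\{d_Y(f(x),f(y))\mid f\colon(X,d,\alpha)\to(Y,d_Y,\beta)\text{ coalgebra morphism}\}$. Formulas of $\mathcal{L}(\Lambda)$: $\phi::=\top\mid\phi_1\vee\phi_2\mid\phi_1\wedge\phi_2\mid u\otimes\phi\mid\hom_s(u,\phi)\mid\lambda(\phi_1,\dots,\phi_n)$ with $u\in[0,1]$, $\lambda\in\Lambda$ $n$-ary; semantics are non-expansive maps $[\![\phi]\!]\colon X\to[0,1]$ with $[\![\top]\!]=0$, $\vee$ = pointwise $\min$, $\wedge$ = pointwise $\max$, $u\otimes\phi=\min(1,u+[\![\phi]\!])$, $\hom_s(u,\phi)=|[\![\phi]\!]-u|$, and $[\![\lambda(\phi_1,\dots,\phi_n)]\!]=\lambda_X(\langle[\![\phi_1]\!],\dots,[\![\phi_n]\!]\rangle)\cdot\alpha$. Logical distance: $ld^\Lambda_\alpha(x,y)=\sup_{\phi}|[\![\phi]\!](x)-[\![\phi]\!](y)|$. *)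

From Stdlib Require Import Reals Lra.
From Stdlib Require List.
From mathcomp Require Import ssreflect ssrfun ssrbool eqtype ssrnat seq fintype bigop.
From Coquelicot Require Import Rbar Lub.

Set Implicit Arguments.
Unset Strict Implicit.
Open Scope R_scope.

Record BPMet := {
  car :> Type;
  dist : car -> car -> R;
  dist_bnd : forall x y, 0 <= dist x y <= 1;
  dist_refl : forall x, dist x x = 0;
  dist_sym : forall x y, dist x y = dist y x;
  dist_tri : forall x y z, dist x z <= dist x y + dist y z }.
Arguments dist {b} _ _.

Record NE (X Y : BPMet) := {
  ne :> X -> Y;
  ne_nexp : forall x y, dist (ne x) (ne y) <= dist x y }.

Definition isometry (X Y : BPMet) (f : NE X Y) : Prop :=
  forall x y, dist (f x) (f y) = dist x y.

Definition ne_id (X : BPMet) : NE X X.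
Proof. refine {| ne := fun x => x |}. intros; lra. Defined.

Definition ne_comp (X Y Z : BPMet) (g : NE Y Z) (f : NE X Y) : NE X Z.
Proof.
  refine {| ne := fun x => g (f x) |}.
  intros x y. eapply Rle_trans; [apply ne_nexp|apply ne_nexp].
Defined.

Record Functor := {
  Fo : BPMet -> BPMet;
  Fm : forall X Y : BPMet, NE X Y -> NE (Fo X) (Fo Y);
  Fm_id : forall (X : BPMet) (t : Fo X), Fm (ne_id X) t = t;
  Fm_comp : forall (X Y Z : BPMet) (f : NE X Y) (g : NE Y Z) (t : Fo X),
      Fm (ne_comp g f) t = Fm g (Fm f t) }.
Arguments Fm _ {X Y} _.

Definition preserves_isometries (F : Functor) : Prop :=
  forall (X Y : BPMet) (f : NE X Y), isometry f -> isometry (Fm F f).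

(* sup_t d(Ff t, Fg t) <= sup_x d(f x, g x), sups taken in [0,1] *)
Definition locally_nonexpansive (F : Functor) : Prop :=
  forall (X Y : BPMet) (f g : NE X Y) (c : R), 0 <= c ->
    (forall x : X, dist (f x) (g x) <= c) ->
    forall t : Fo F X, dist (Fm F f t) (Fm F g t) <= c.

Definition Sub (X : BPMet) (l : list X) : BPMet.
Proof.
  refine {| car := {x : X | List.In x l};
            dist := fun a b : {x : X | List.In x l} => dist (proj1_sig a) (proj1_sig b) |}.
  - intros; apply dist_bnd.
  - intros; apply dist_refl.
  - intros; apply dist_sym.
  - intros; apply dist_tri.
Defined.

Definition sub_incl (X : BPMet) (l : list X) : NE (Sub l) X.
Proof. refine {| ne := fun a : Sub l => proj1_sig a |}. intros; simpl; lra. Defined.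

Record SubFunctor (F : Functor) := {
  sf_pred : forall X : BPMet, Fo F X -> Prop;
  sf_closed : forall (X Y : BPMet) (f : NE X Y) (t : Fo F X),
      sf_pred t -> sf_pred (Fm F f t) }.
Arguments sf_pred {F} _ {X} _.

Definition dense_sub (F : Functor) (G : SubFunctor F) : Prop :=
  forall (X : BPMet) (t : Fo F X) (eps : R), 0 < eps ->
    exists t' : Fo F X, sf_pred G t' /\ dist t t' < eps.

Definition omega_bounded (F : Functor) (G : SubFunctor F) : Prop :=
  forall (X : BPMet) (t : Fo F X), sf_pred G t ->
    exists (l : list X) (t' : Fo F (Sub l)),
      sf_pred G t' /\ t = Fm F (sub_incl l) t'.

Lemma abs_tri (a b c : R) : Rabs (a - c) <= Rabs (a - b) + Rabs (b - c).
Proof. split_Rabs; lra. Qed.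

Definition I01 : BPMet.
Proof.
  refine {| car := {u : R | 0 <= u <= 1};
            dist := fun a b : {u : R | 0 <= u <= 1} => Rabs (proj1_sig a - proj1_sig b) |}.
  - intros [a Ha] [b Hb]; simpl; split_Rabs; lra.
  - intros [a Ha]; simpl; split_Rabs; lra.
  - intros [a Ha] [b Hb]; simpl; split_Rabs; lra.
  - intros [a Ha] [b Hb] [c Hc]; simpl; apply abs_tri.
Defined.

Definition val01 (u : I01) : R := proj1_sig u.

Lemma le_bigmax_seq (I : Type) (s : seq I) (F : I -> R) (i : I) :
  List.In i s -> F i <= \big[Rmax/0]_(j <- s) F j.
Proof.
  elim: s => [|a s IH] //= [->|H]; rewrite big_cons.
  - apply Rmax_l.
  - eapply Rle_trans; [apply IH, H|apply Rmax_r].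
Qed.

Lemma le_bigmax (n : nat) (F : 'I_n -> R) (i : 'I_n) :
  F i <= \big[Rmax/0]_(j < n) F j.
Proof.
  apply le_bigmax_seq.
  have H : i \in index_enum 'I_n by rewrite mem_index_enum.
  move: H. elim: (index_enum 'I_n) => [|a s IH] //=.
  rewrite in_cons => /orP [/eqP ->|H]; [by left|right; exact: IH].
Qed.

Definition Cube (n : nat) : BPMet.
Proof.
  refine {| car := 'I_n -> I01;
            dist := fun v w : 'I_n -> I01 => \big[Rmax/0]_(i < n) dist (v i) (w i) |}.
  - intros v w. apply (big_ind (fun m => 0 <= m <= 1)); try lra.
    + intros a b Ha Hb. unfold Rmax; destruct Rle_dec; lra.
    + intros i _; apply dist_bnd.
  - intros v. apply (big_ind (fun m => m = 0)); auto.
    + intros a b -> ->. unfold Rmax; destruct Rle_dec; lra.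
    + intros i _; apply dist_refl.
  - intros v w. apply eq_bigr => i _. apply dist_sym.
  - intros u v w.
    apply (big_ind (fun m => m <= \big[Rmax/0]_(i < n) dist (u i) (v i)
                               + \big[Rmax/0]_(i < n) dist (v i) (w i))).
    + apply Rplus_le_le_0_compat;
        (apply (big_ind (fun m => 0 <= m));
         [lra
         | intros a b Ha Hb; cbv beta in *; unfold Rmax at 1; destruct Rle_dec; lra
         | intros i _; apply (proj1 (dist_bnd _ _))]).
    + intros a b Ha Hb; cbv beta in *; unfold Rmax at 1; destruct Rle_dec; lra.
    + intros i _. eapply Rle_trans; [apply dist_tri|].
      apply Rplus_le_compat; [apply (le_bigmax (fun j => dist (u j) (v j)))|apply (le_bigmax (fun j => dist (v j) (w j)))].
Defined.

Record PredLifting (F : Functor) (n : nat) := {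
  pl :> forall X : BPMet, NE X (Cube n) -> NE (Fo F X) I01;
  pl_nat : forall (X Y : BPMet) (f : NE Y X) (phi : NE X (Cube n)) (t : Fo F Y),
      pl (ne_comp phi f) t = pl phi (Fm F f t) }.

Definition mk01 (r : R) (H : 0 <= r <= 1) : I01 := exist _ r H.

Definition ne_const0 (X : BPMet) : NE X I01.
Proof.
  refine {| ne := fun _ => @mk01 0 ltac:(lra) |}.
  intros x y; simpl. rewrite Rminus_0_r Rabs_R0. apply dist_bnd.
Defined.

Lemma min01 (a b : I01) : 0 <= Rmin (val01 a) (val01 b) <= 1.
Proof. destruct a as [a Ha], b as [b Hb]; simpl; unfold Rmin; destruct Rle_dec; lra. Qed.
Lemma max01 (a b : I01) : 0 <= Rmax (val01 a) (val01 b) <= 1.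
Proof. destruct a as [a Ha], b as [b Hb]; simpl; unfold Rmax; destruct Rle_dec; lra. Qed.
Lemma tens01 (u a : I01) : 0 <= Rmin 1 (val01 u + val01 a) <= 1.
Proof. destruct a as [a Ha], u as [u Hu]; simpl; unfold Rmin; destruct Rle_dec; lra. Qed.
Lemma hom01 (u a : I01) : 0 <= Rabs (val01 a - val01 u) <= 1.
Proof. destruct a as [a Ha], u as [u Hu]; simpl; split_Rabs; lra. Qed.

(* pointwise min (the quantale join) *)
Definition ne_min (X : BPMet) (f g : NE X I01) : NE X I01.
Proof.
  refine {| ne := fun x => mk01 (min01 (f x) (g x)) |}.
  intros x y; simpl.
  have Hf := ne_nexp f x y; have Hg := ne_nexp g x y; simpl in Hf, Hg.
  revert Hf Hg; unfold val01, Rmin.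
  destruct (f x) as [a1 ?], (g x) as [b1 ?], (f y) as [a2 ?], (g y) as [b2 ?]; simpl;
  repeat destruct Rle_dec; split_Rabs; lra.
Defined.

(* pointwise max (the quantale meet) *)
Definition ne_max (X : BPMet) (f g : NE X I01) : NE X I01.
Proof.
  refine {| ne := fun x => mk01 (max01 (f x) (g x)) |}.
  intros x y; simpl.
  have Hf := ne_nexp f x y; have Hg := ne_nexp g x y; simpl in Hf, Hg.
  revert Hf Hg; unfold val01, Rmax.
  destruct (f x) as [a1 ?], (g x) as [b1 ?], (f y) as [a2 ?], (g y) as [b2 ?]; simpl;
  repeat destruct Rle_dec; split_Rabs; lra.
Defined.

Definition ne_tens (X : BPMet) (u : I01) (f : NE X I01) : NE X I01.
Proof.
  refine {| ne := fun x => mk01 (tens01 u (f x)) |}.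
  intros x y; simpl.
  have Hf := ne_nexp f x y; simpl in Hf.
  revert Hf; unfold val01, Rmin.
  destruct (f x) as [a1 ?], (f y) as [a2 ?], u as [u0 ?]; simpl;
  repeat destruct Rle_dec; split_Rabs; lra.
Defined.

Definition ne_hom (X : BPMet) (u : I01) (f : NE X I01) : NE X I01.
Proof.
  refine {| ne := fun x => mk01 (hom01 u (f x)) |}.
  intros x y; simpl.
  have Hf := ne_nexp f x y; simpl in Hf.
  revert Hf; unfold val01.
  destruct (f x) as [a1 ?], (f y) as [a2 ?], u as [u0 ?]; simpl;
  split_Rabs; lra.
Defined.

Definition ne_tuple (X : BPMet) (n : nat) (fs : 'I_n -> NE X I01) : NE X (Cube n).
Proof.
  refine {| ne := (fun x => fun i => fs i x) : X -> Cube n |}.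
  intros x y; simpl.
  apply (big_ind (fun m => m <= dist x y)).
  - apply dist_bnd.
  - intros a b Ha Hb; cbv beta in *; unfold Rmax at 1; destruct Rle_dec; lra.
  - intros i _; apply (ne_nexp (fs i)).
Defined.

(* Lambda is given as a family lam indexed by L, with arities ar *)
Inductive Form (L : Type) (ar : L -> nat) : Type :=
| FTop : Form ar
| FOr : Form ar -> Form ar -> Form ar
| FAnd : Form ar -> Form ar -> Form ar
| FTens : I01 -> Form ar -> Form ar
| FHom : I01 -> Form ar -> Form ar
| FLam : forall l : L, ('I_(ar l) -> Form ar) -> Form ar.

Fixpoint sem (F : Functor) (L : Type) (ar : L -> nat)
    (lam : forall l : L, PredLifting F (ar l))
    (X : BPMet) (alpha : NE X (Fo F X)) (phi : Form ar) {struct phi} : NE X I01 :=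
  match phi with
  | FTop => ne_const0 X
  | FOr a b => ne_min (sem lam alpha a) (sem lam alpha b)
  | FAnd a b => ne_max (sem lam alpha a) (sem lam alpha b)
  | FTens u a => ne_tens u (sem lam alpha a)
  | FHom u a => ne_hom u (sem lam alpha a)
  | FLam l args =>
      ne_comp (lam l X (ne_tuple (fun i => sem lam alpha (args i)))) alpha
  end.

Definition ld (F : Functor) (L : Type) (ar : L -> nat)
    (lam : forall l : L, PredLifting F (ar l))
    (X : BPMet) (alpha : NE X (Fo F X)) (x y : X) : Rbar :=
  Lub_Rbar (fun r => exists phi : Form ar,
      r = Rabs (val01 (sem lam alpha phi x) - val01 (sem lam alpha phi y))).

Definition coalg_morph (F : Functor) (X Y : BPMet)
    (alpha : NE X (Fo F X)) (beta : NE Y (Fo F Y)) (f : NE X Y) : Prop :=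
  forall x : X, beta (f x) = Fm F f (alpha x).

Definition bd (F : Functor) (X : BPMet) (alpha : NE X (Fo F X)) (x y : X) : Rbar :=
  Glb_Rbar (fun r => exists (Y : BPMet) (beta : NE Y (Fo F Y)) (f : NE X Y),
      coalg_morph alpha beta f /\ r = dist (f x) (f y)).

(* Take for Λ all liftings φ ↦ g ∘ Fφ with g : F[0,1]^n → [0,1] non-expansive
   (by Yoneda, these are all n-ary predicate liftings).  The logical distance ld
   is a pseudometric below d, so the identity X → (X, ld) is a coalgebra
   morphism as soon as Fid ∘ α is non-expansive for ld.  To show this, move the
   two states Fid(αx), Fid(αy) by ε to elements supported on a finite set P
   (density and ω-boundedness).  The Fréchet embedding z ↦ (ld(z,p))_{p ∈ P} is
   isometric on P, hence so is its image under F, and on P it is ε-close to a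
   tuple Ψ of formulas (finite conjunctions of hom_s(u, φ)); local
   non-expansiveness carries this closeness through F.  Finally the distance
   between FΨ(αx) and FΨ(αy) is the value at y of the formula λ(Ψ) whose
   lifting is the distance from FΨ(αx), so it is bounded by ld(x,y). *)
From Stdlib Require Import Reals Lra.
From Stdlib Require Import ProofIrrelevance FunctionalExtensionality Classical ClassicalEpsilon.
From Stdlib Require List.
From mathcomp Require Import ssreflect ssrfun ssrbool eqtype ssrnat seq fintype bigop.
From Coquelicot Require Import Rbar Lub.

Set Implicit Arguments.
Unset Strict Implicit.
Open Scope R_scope.

Lemma NE_ext (X Y : BPMet) (f g : NE X Y) : (forall x, f x = g x) -> f = g.
Proof.
  case: f g => [f f_nexp] [g g_nexp] /= fg.
  have {fg} E : f = g by apply: functional_extensionality.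
  subst g; f_equal; exact: proof_irrelevance.
Qed.

Lemma bigmax_le (n : nat) (F : 'I_n -> R) (c : R) :
  0 <= c -> (forall i, F i <= c) -> \big[Rmax/0]_(i < n) F i <= c.
Proof.
  move=> c_ge0 Fc; apply: (big_ind (fun m => m <= c)) => // a b.
  exact: Rmax_lub.
Qed.

Lemma dist_tri_chain (X : BPMet) (a b c d : X) :
  dist a d <= dist a b + dist b c + dist c d.
Proof. have := dist_tri a b d; have := dist_tri b c d; lra. Qed.

Lemma dist_diff_le (X : BPMet) (a t t' : X) :
  Rabs (dist a t - dist a t') <= dist t t'.
Proof.
  have := dist_tri a t t'; have := dist_tri a t' t.
  rewrite (dist_sym t' t); split_Rabs; lra.
Qed.

Definition dist_from (X : BPMet) (a : X) : NE X I01 :=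
  {| ne := fun t => mk01 (dist_bnd a t); ne_nexp := dist_diff_le a |}.

Definition sub_widen (X : BPMet) (l l' : list X) (ll' : List.incl l l') : NE (Sub l) (Sub l').
Proof.
  refine {| ne := (fun a => exist _ (proj1_sig a) (ll' _ (proj2_sig a))) : Sub l -> Sub l' |}.
  move=> a b /=; lra.
Defined.

Lemma sub_incl_widen (X : BPMet) (l l' : list X) (ll' : List.incl l l') :
  ne_comp (sub_incl l') (sub_widen ll') = sub_incl l.
Proof. exact: NE_ext. Qed.

(* The default point z0 of [List.nth] is never reached, as k < length P. *)
Definition frechet (X : BPMet) (P : list X) (z0 : X) : NE X (Cube (length P)).
Proof.
  refine {| ne := (fun z k => mk01 (dist_bnd z (List.nth k P z0))) : X -> Cube (length P) |}.
  move=> z z' /=; apply: bigmax_le => [|k]; first exact: (proj1 (dist_bnd _ _)).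
  rewrite (dist_sym z) (dist_sym z'); exact: dist_diff_le.
Defined.

Lemma In_nth_ord (T : Type) (P : list T) (z0 b : T) :
  List.In b P -> exists k : 'I_(length P), List.nth k P z0 = b.
Proof.
  move=> /(List.In_nth P b z0) [n [/ltP n_lt <-]].
  by exists (Ordinal n_lt).
Qed.

Lemma frechet_sub_isometry (X : BPMet) (P : list X) (z0 : X) :
  isometry (ne_comp (frechet P z0) (sub_incl P)).
Proof.
  move=> a b; apply: Rle_antisym; first exact: ne_nexp.
  have [k Ek] := In_nth_ord z0 (proj2_sig b).
  apply: Rle_trans (le_bigmax _ k) => /=.
  rewrite Ek dist_refl Rminus_0_r Rabs_pos_eq; [lra | exact: (proj1 (dist_bnd _ _))].
Qed.

Section FiniteApproximation.
Variables (F : Functor) (G : SubFunctor F).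
Hypotheses (F_iso : preserves_isometries F) (F_lne : locally_nonexpansive F).
Hypotheses (G_dense : dense_sub G) (G_omega : omega_bounded G).

Lemma Fo_finite_support_approx (Y : BPMet) (s t : Fo F Y) (eps : R) : 0 < eps ->
  exists (P : list Y) (u v : Fo F (Sub P)),
    dist s (Fm F (sub_incl P) u) < eps /\ dist t (Fm F (sub_incl P) v) < eps.
Proof.
  move=> eps_gt0.
  have [s1 [Gs1 ds1]] := G_dense s eps_gt0.
  have [t1 [Gt1 dt1]] := G_dense t eps_gt0.
  have [l [u [_ Es1]]] := G_omega Gs1.
  have [l' [v [_ Et1]]] := G_omega Gt1.
  subst s1 t1.
  have incl_l := List.incl_appl l' (List.incl_refl l).
  have incl_l' := List.incl_appr l (List.incl_refl l').
  exists (l ++ l')%list, (Fm F (sub_widen incl_l) u), (Fm F (sub_widen incl_l') v).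
  by rewrite -!Fm_comp !sub_incl_widen.
Qed.

Lemma Fm_sub_incl_dist_le (Y : BPMet) (P : list Y) (z0 : Y)
    (Psi : NE Y (Cube (length P))) (eps : R) :
  0 <= eps -> (forall z, List.In z P -> dist (frechet P z0 z) (Psi z) <= eps) ->
  forall u v : Fo F (Sub P),
    dist (Fm F (sub_incl P) u) (Fm F (sub_incl P) v)
    <= dist (Fm F Psi (Fm F (sub_incl P) u)) (Fm F Psi (Fm F (sub_incl P) v)) + 2 * eps.
Proof.
  move=> eps_ge0 close u v.
  have close_P := F_lne (f := ne_comp (frechet P z0) (sub_incl P))
    (g := ne_comp Psi (sub_incl P)) eps_ge0 (fun a => close _ (proj2_sig a)).
  have := close_P u; have := close_P v.
  have := F_iso (@frechet_sub_isometry _ P z0) u v.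
  have := ne_nexp (Fm F (sub_incl P)) u v.
  rewrite !Fm_comp.
  set Eu := Fm F (frechet P z0) _; set Ev := Fm F (frechet P z0) _.
  set Psiu := Fm F Psi (Fm F (sub_incl P) u); set Psiv := Fm F Psi (Fm F (sub_incl P) v).
  have := dist_tri_chain Eu Psiu Psiv Ev.
  rewrite (dist_sym Psiv Ev); lra.
Qed.

Lemma Fo_dist_le_frechet_approx (Y : BPMet) (z0 : Y) (s t : Fo F Y) (eps : R) :
  0 < eps -> exists P : list Y, forall Psi : NE Y (Cube (length P)),
    (forall z, List.In z P -> dist (frechet P z0 z) (Psi z) <= eps) ->
    dist s t <= dist (Fm F Psi s) (Fm F Psi t) + 6 * eps.
Proof.
  move=> eps_gt0.
  have [P [u [v [ds dt]]]] := Fo_finite_support_approx s t eps_gt0.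
  exists P => Psi close.
  have := Fm_sub_incl_dist_le (Rlt_le _ _ eps_gt0) close u v.
  set a := Fm F (sub_incl P) u in ds *; set b := Fm F (sub_incl P) v in dt *.
  have := ne_nexp (Fm F Psi) s a; have := ne_nexp (Fm F Psi) t b.
  have := dist_tri_chain s a b t.
  have := dist_tri_chain (Fm F Psi a) (Fm F Psi s) (Fm F Psi t) (Fm F Psi b).
  rewrite (dist_sym b t) (dist_sym (Fm F Psi a) (Fm F Psi s)); lra.
Qed.

End FiniteApproximation.

Section LogicalDistance.
Variables (F : Functor) (L : Type) (ar : L -> nat) (lam : forall l : L, PredLifting F (ar l)).
Variables (X : BPMet) (alpha : NE X (Fo F X)).

Definition fdist (phi : Form ar) (x y : X) : R :=
  Rabs (val01 (sem lam alpha phi x) - val01 (sem lam alpha phi y)).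

Lemma fdist_le1 (phi : Form ar) (x y : X) : fdist phi x y <= 1.
Proof.
  rewrite /fdist; case: (sem lam alpha phi x) => a /= ?; case: (sem lam alpha phi y) => b /= ?.
  split_Rabs; lra.
Qed.

Lemma fdist_top (x y : X) : fdist (FTop ar) x y = 0.
Proof. by rewrite /fdist /= Rminus_0_r Rabs_R0. Qed.

Definition ldR (x y : X) : R := real (ld lam alpha x y).

Lemma ld_finite (x y : X) : ld lam alpha x y = Finite (ldR x y).
Proof.
  have [ub lub] := Lub_Rbar_correct (fun r => exists phi, r = fdist phi x y).
  have ld_ge0 : Rbar_le 0 (ld lam alpha x y).
    by apply: ub; exists (FTop ar); rewrite fdist_top.
  have ld_le1 : Rbar_le (ld lam alpha x y) 1.
    by apply: lub => _ [phi ->]; exact: fdist_le1.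
  by rewrite /ldR; case: (ld lam alpha x y) ld_ge0 ld_le1.
Qed.

Lemma fdist_le_ldR (phi : Form ar) (x y : X) : fdist phi x y <= ldR x y.
Proof.
  have [ub _] := Lub_Rbar_correct (fun r => exists phi, r = fdist phi x y).
  suff : Rbar_le (fdist phi x y) (ld lam alpha x y) by rewrite ld_finite.
  by apply: ub; exists phi.
Qed.

Lemma ldR_le (x y : X) (c : R) : (forall phi, fdist phi x y <= c) -> ldR x y <= c.
Proof.
  move=> le_c.
  have [_ lub] := Lub_Rbar_correct (fun r => exists phi, r = fdist phi x y).
  suff : Rbar_le (ld lam alpha x y) c by rewrite ld_finite.
  by apply: lub => _ [phi ->]; exact: le_c.
Qed.

Lemma ldR_approx (x y : X) (eps : R) : 0 < eps ->
  exists phi, ldR x y - eps < fdist phi x y.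
Proof.
  move=> eps_gt0; apply: NNPP => no_phi.
  suff : ldR x y <= ldR x y - eps by lra.
  apply: ldR_le => phi; apply: Rnot_lt_le => lt_phi.
  by apply: no_phi; exists phi.
Qed.

Lemma ldR_bnd (x y : X) : 0 <= ldR x y <= 1.
Proof.
  split; last by apply: ldR_le => phi; exact: fdist_le1.
  by rewrite -(fdist_top x y); exact: fdist_le_ldR.
Qed.

Lemma ldR_refl (x : X) : ldR x x = 0.
Proof.
  apply: Rle_antisym; last exact: (proj1 (ldR_bnd x x)).
  by apply: ldR_le => phi; rewrite /fdist Rminus_diag_eq // Rabs_R0; lra.
Qed.

Lemma ldR_sym (x y : X) : ldR x y = ldR y x.
Proof.
  suff ldR_sym_le a b : ldR a b <= ldR b a by apply: Rle_antisym.
  by apply: ldR_le => phi; rewrite /fdist Rabs_minus_sym; exact: fdist_le_ldR.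
Qed.

Lemma ldR_tri (x y z : X) : ldR x z <= ldR x y + ldR y z.
Proof.
  apply: ldR_le => phi; apply: Rle_trans (abs_tri _ _ _) _.
  by apply: Rplus_le_compat; exact: fdist_le_ldR.
Qed.

Lemma ldR_le_dist (x y : X) : ldR x y <= dist x y.
Proof. by apply: ldR_le => phi; exact: (ne_nexp (sem lam alpha phi)). Qed.

Definition ld_space : BPMet :=
  {| car := X; dist := ldR; dist_bnd := ldR_bnd; dist_refl := ldR_refl;
     dist_sym := ldR_sym; dist_tri := ldR_tri |}.

Definition ld_id : NE X ld_space := {| ne := (id : X -> ld_space); ne_nexp := ldR_le_dist |}.

Definition sem_ld (phi : Form ar) : NE ld_space I01 :=
  {| ne := (sem lam alpha phi : X -> I01) : ld_space -> I01; ne_nexp := fdist_le_ldR phi |}.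

Definition FBigAnd (I : Type) (f : I -> Form ar) (s : seq I) : Form ar :=
  foldr (fun i phi => FAnd (f i) phi) (FTop ar) s.

Lemma sem_FBigAnd_ge (I : eqType) (f : I -> Form ar) (s : seq I) (i : I) (z : X) :
  i \in s -> val01 (sem lam alpha (f i) z) <= val01 (sem lam alpha (FBigAnd f s) z).
Proof.
  elim: s => [|j s IHs] //=; rewrite in_cons => /orP [/eqP <-|i_s].
  - exact: Rmax_l.
  - exact: Rle_trans (IHs i_s) (Rmax_r _ _).
Qed.

Lemma sem_FBigAnd_le (I : Type) (f : I -> Form ar) (s : seq I) (z : X) (c : R) :
  0 <= c -> (forall i, val01 (sem lam alpha (f i) z) <= c) ->
  val01 (sem lam alpha (FBigAnd f s) z) <= c.
Proof. by move=> c_ge0 fc; elim: s => [|i s IHs] //=; apply: Rmax_lub. Qed.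

(* psi_k := ⋀_k' hom_s(φ_kk'(p_k), φ_kk'), where φ_kk' almost realises ld(p_k', p_k):
   psi_k(z) <= ld(z, p_k) everywhere, and psi_k(p_k') > ld(p_k', p_k) - ε. *)
Lemma frechet_formula_approx (P : list ld_space) (z0 : ld_space) (eps : R) : 0 < eps ->
  exists psi : 'I_(length P) -> Form ar, forall z, List.In z P ->
    dist (frechet P z0 z) (ne_tuple (fun k => sem_ld (psi k)) z) <= eps.
Proof.
  move=> eps_gt0; set m := length P; set p := fun k : 'I_m => List.nth k P z0.
  have [phi phi_approx] := choice
    (fun kk : 'I_m * 'I_m => fun phi => ldR (p kk.2) (p kk.1) - eps < fdist phi (p kk.2) (p kk.1))
    (fun kk => ldR_approx _ _ eps_gt0).
  pose psi k := FBigAnd (fun k' => FHom (sem lam alpha (phi (k, k')) (p k)) (phi (k, k'))) (enum 'I_m).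
  exists psi => _ /(In_nth_ord z0) [k' <-].
  apply: bigmax_le => [|k /=]; first lra.
  have psi_le : val01 (sem lam alpha (psi k) (p k')) <= ldR (p k') (p k).
    apply: sem_FBigAnd_le => [|k'']; first exact: (proj1 (ldR_bnd _ _)).
    exact: fdist_le_ldR.
  have psi_ge : ldR (p k') (p k) - eps < val01 (sem lam alpha (psi k) (p k')).
    apply: Rlt_le_trans (phi_approx (k, k')) _.
    by apply: (sem_FBigAnd_ge (fun k'' => FHom _ (phi (k, k'')))); rewrite mem_enum.
  rewrite -/(p k') -/(p k); rewrite /val01 in psi_le psi_ge; split_Rabs; lra.
Qed.

End LogicalDistance.

Definition yoneda_lifting (F : Functor) (n : nat) (g : NE (Fo F (Cube n)) I01) : PredLifting F n.
Proof.
  refine {| pl := fun X phi => ne_comp g (Fm F phi) |}.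
  by move=> X Y f phi t /=; rewrite Fm_comp.
Defined.

Definition yoneda_label (F : Functor) : Type := {n : nat & NE (Fo F (Cube n)) I01}.
Definition yoneda_arity (F : Functor) (l : yoneda_label F) : nat := projT1 l.
Definition yoneda_lam (F : Functor) (l : yoneda_label F) : PredLifting F (yoneda_arity l) :=
  yoneda_lifting (projT2 l).

Lemma bd_le_coalg_morph (F : Functor) (X Y : BPMet) (alpha : NE X (Fo F X))
    (beta : NE Y (Fo F Y)) (f : NE X Y) (x y : X) :
  coalg_morph alpha beta f -> Rbar_le (bd alpha x y) (dist (f x) (f y)).
Proof.
  move=> f_morph; apply: (proj1 (Glb_Rbar_correct _)).
  by exists Y, beta, f.
Qed.

Section Expressivity.
Variables (F : Functor) (G : SubFunctor F).
Hypotheses (F_iso : preserves_isometries F) (F_lne : locally_nonexpansive F).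
Hypotheses (G_dense : dense_sub G) (G_omega : omega_bounded G).
Variables (X : BPMet) (alpha : NE X (Fo F X)).

Notation ldY := (ld_space (@yoneda_lam F) alpha).
Notation idY := (ld_id (@yoneda_lam F) alpha).

Lemma Fm_sem_tuple_dist_le_ld (m : nat) (psi : 'I_m -> Form (@yoneda_arity F)) (x y : X) :
  dist (Fm F (ne_tuple (fun k => sem (@yoneda_lam F) alpha (psi k))) (alpha x))
       (Fm F (ne_tuple (fun k => sem (@yoneda_lam F) alpha (psi k))) (alpha y))
  <= ldR (@yoneda_lam F) alpha x y.
Proof.
  set Psi := ne_tuple _.
  have := fdist_le_ldR (@yoneda_lam F) alpha
    (FLam (l := existT _ m (dist_from (Fm F Psi (alpha x)))) psi) x y.
  rewrite /fdist /= dist_refl Rminus_0_l Rabs_Ropp Rabs_pos_eq //.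
  exact: (proj1 (dist_bnd _ _)).
Qed.

Lemma ld_coalg_nexp (x y : X) :
  dist (Fm F idY (alpha x)) (Fm F idY (alpha y)) <= ldR (@yoneda_lam F) alpha x y.
Proof.
  apply: Rle_plus_epsilon => eps eps_gt0.
  have eps6_gt0 : 0 < eps / 6 by lra.
  have [P approx] := Fo_dist_le_frechet_approx F_iso F_lne G_dense G_omega
    (x : ldY) (Fm F idY (alpha x)) (Fm F idY (alpha y)) eps6_gt0.
  have [psi close] := frechet_formula_approx P x eps6_gt0.
  have := approx _ close; rewrite -!Fm_comp.
  have -> : ne_comp (ne_tuple (fun k => sem_ld (@yoneda_lam F) alpha (psi k))) idY
            = ne_tuple (fun k => sem (@yoneda_lam F) alpha (psi k)) by exact: NE_ext.
  have := Fm_sem_tuple_dist_le_ld psi x y; lra.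
Qed.

Definition ld_coalg : NE ldY (Fo F ldY) :=
  {| ne := (fun z : X => Fm F idY (alpha z)) : ldY -> Fo F ldY; ne_nexp := ld_coalg_nexp |}.

Lemma bd_le_ld (x y : X) : Rbar_le (bd alpha x y) (ld (@yoneda_lam F) alpha x y).
Proof.
  rewrite ld_finite; apply: (bd_le_coalg_morph (beta := ld_coalg) (f := idY)).
  by move=> z.
Qed.

End Expressivity.

Theorem corollary5 (F : Functor) :
  preserves_isometries F ->
  locally_nonexpansive F ->
  (exists G : SubFunctor F, dense_sub G /\ omega_bounded G) ->
  exists (L : Type) (ar : L -> nat) (lam : forall l : L, PredLifting F (ar l)),
    forall (X : BPMet) (alpha : NE X (Fo F X)) (x y : X),
      Rbar_le (bd alpha x y) (ld lam alpha x y).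
Proof.
  move=> F_iso F_lne [G [G_dense G_omega]].
  exists (yoneda_label F), (@yoneda_arity F), (@yoneda_lam F) => X alpha x y.
  exact: (bd_le_ld F_iso F_lne G_dense G_omega).
Qed.
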